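(* Let $n \in \mathbb{Z}_{\geq 0}$, $k \in \mathbb{Z}_{\geq 1}$, $m_1,\dots,m_k\in\mathbb{Z}_{\geq 2}$, and let \[ G = \langle e_1, \ldots, e_k, h_1, \ldots, h_{2n} \mid e_1^{m_1} = \cdots = e_k^{m_k} = 1 \rangle . \] Let $G_1$ be the subgroup of $G$ generated by $\{e_1,\dots,e_k\}$ and let $S_1\subset G$ be the set defined below. Then for every $w \in G_1$ there exist an element $\gamma$ of the subgroup $\langle S_1\rangle$ generated by $S_1$ and integers $i_1,\dots,i_k$ such that $\gamma w = e_k^{i_k}\cdots e_1^{i_1}$.
   Context: Notation: $[l]=\{1,\dots,l\}$ for $l\in\mathbb{Z}_{>0}$; $[g,h]=ghg^{-1}h^{-1}$ and ${}^{g}h = ghg^{-1}$. For $2\le t\le k$ set $\Lambda_t = \big(([m_1]\times\cdots\times[m_{t-1}])\setminus\{(m_1,\dots,m_{t-1})\}\big)\times[m_t-1]$ and $\Xi_t=[m_{t+1}]\times\cdots\times[m_k]$, where $\Xi_k=\{0\}$. For $\lambda=(u_1,\dots,u_t)\in\Lambda_t$ and $\xi=(u_{t+1},\dots,u_k)\in\Xi_t$ put $f_\lambda=[e_t^{u_t}, e_{t-1}^{u_{t-1}}\cdots e_1^{u_1}]$ and $g_\xi = e_k^{u_k}\cdots e_{t+1}^{u_{t+1}}$ (with $g_\xi=1$ for $\xi\in\Xi_k$). Then $S_1=\{{}^{g_\xi}f_\lambda \mid 2\le t\le k,\ \lambda\in\Lambda_t,\ \xi\in\Xi_t\}$. *)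

(* Concrete model of the finitely presented group
   G = < e_1..e_k, h_1..h_{2n} | e_i^{m_i} = 1 >  (free product of cyclic
   groups Z/m_i and a free group of rank 2n) via words and a normal form. *)
From mathcomp Require Import all_boot all_order all_algebra.
Set Implicit Arguments. Unset Strict Implicit. Unset Printing Implicit Defensive.

(* Letters: [E i a] stands for e_i^a, [H j b] for h_j (b = true) or h_j^{-1}. *)
Inductive letter := E of nat & nat | H of nat & bool.

Definition word := seq letter.

Section Model.
Variable m : nat -> nat.

Definition push (x : letter) (w : word) : word :=
  match x with
  | E i a =>
      let a' := a %% m i in
      match w with
      | E j b :: w' =>
          if j == i then
            let c := (a' + b) %% m i in
            if c == 0 then w' else E i c :: w'
          else if a' == 0 then w else E i a' :: w
      | _ => if a' == 0 then w else E i a' :: w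
      end
  | H j b =>
      match w with
      | H j' b' :: w' => if (j' == j) && (b' == ~~ b) then w' else x :: w
      | _ => x :: w
      end
  end.

Definition norm (w : word) : word := foldr push [::] w.

Definition Geq (u v : word) : Prop := norm u = norm v.

Definition linv (x : letter) : letter :=
  match x with E i a => E i (m i - a %% m i) | H j b => H j (~~ b) end.
Definition ginv (w : word) : word := rev (map linv w).
Definition gmul (u v : word) : word := u ++ v.
Definition gone : word := [::].

Definition gcomm (g h : word) : word := gmul (gmul (gmul g h) (ginv g)) (ginv h).
Definition gconj (g h : word) : word := gmul (gmul g h) (ginv g).

Definition egen (i : nat) : word := [:: E i 1].
Definition epow (i u : nat) : word := flatten (nseq u (egen i)).
Definition epowz (i : nat) (z : int) : word :=
  match z with
  | Posz u => epow i u
  | Negz u => flatten (nseq u.+1 (ginv (egen i)))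
  end.

Inductive gen (S : word -> Prop) : word -> Prop :=
  | gen_base w : S w -> gen S w
  | gen_one : gen S gone
  | gen_mul u v : gen S u -> gen S v -> gen S (gmul u v)
  | gen_inv u : gen S u -> gen S (ginv u).

Definition valid_letter (n k : nat) (x : letter) : bool :=
  match x with E i _ => (1 <= i <= k) | H j _ => (1 <= j <= 2 * n) end.
Definition in_G (n k : nat) (w : word) : Prop := all (valid_letter n k) w.

Definition G1gens (k : nat) (w : word) : Prop :=
  exists i, (1 <= i <= k)%N /\ w = egen i.
Definition in_G1 (k : nat) (w : word) : Prop := gen (G1gens k) w.

Definition eprod_desc (lo hi : nat) (u : nat -> nat) : word :=
  flatten [seq epow j (u j) | j <- rev (iota lo (hi.+1 - lo))].

Definition f_lam (t : nat) (u : nat -> nat) : word :=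
  gcomm (epow t (u t)) (eprod_desc 1 t.-1 u).
Definition g_xi (k t : nat) (u : nat -> nat) : word := eprod_desc t.+1 k u.

(* The set S_1: a tuple (u_1,...,u_k) encodes (lambda, xi). *)
Definition S1 (k : nat) (w : word) : Prop :=
  exists t (u : nat -> nat),
    [/\ (2 <= t <= k)%N,
        (forall j, (1 <= j <= k)%N -> (1 <= u j <= m j)%N),
        (u t <= (m t).-1)%N,
        (exists j, (1 <= j <= t.-1)%N /\ (u j != m j)) &
        w = gconj (g_xi k t u) (f_lam t u)].

Definition enormal (k : nat) (z : nat -> int) : word :=
  flatten [seq epowz j (z j) | j <- rev (iota 1 k)].

End Model.

(* Every element of G_1 is a product of generators e_i.  We multiply these
   generators one at a time onto an ordered product
   P(u) = e_k^{u_k} ... e_1^{u_1}, starting from u = m, i.e. P(u) = 1.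
   Writing P(u) = X A Y with A = e_i^{u_i}, the identity
     ^X[A e_i, Y] (^X[A, Y])^-1 X A Y e_i = X (A e_i) Y
   shows that P(u) e_i is again an ordered product after left multiplication
   by two conjugated commutators ^X[e_i^a, Y], each of which is trivial or
   lies in S_1.  Equality of words is a congruence because normalisation is
   the action of words on reduced words by [push]. *)

From mathcomp Require Import all_boot all_order all_algebra.
From mathcomp Require Import zify.
From Stdlib Require Import Setoid Morphisms.
Set Implicit Arguments. Unset Strict Implicit. Unset Printing Implicit Defensive.

Section Words.
Variable m : nat -> nat.

Definition reduced_letter (x : letter) : bool :=
  if x is E i a then (a != 0) && (a %% m i == a) else true.

Definition reduced_pair (x y : letter) : bool :=
  match x, y with
  | E i _, E j _ => i != j
  | H j b, H j' b' => ~~ ((j' == j) && (b' == ~~ b))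
  | _, _ => true
  end.

Fixpoint reduced (w : word) : bool :=
  if w is x :: w' then
    [&& reduced_letter x, (if w' is y :: _ then reduced_pair x y else true)
      & reduced w']
  else true.

Definition head_E (i : nat) (w : word) : bool :=
  if w is E j _ :: _ then j == i else false.

Lemma pushE_mod i a w : push m (E i a) w = push m (E i (a %% m i)) w.
Proof. by rewrite /push modn_mod. Qed.

Lemma pushE_nohead i a w : ~~ head_E i w ->
  push m (E i a) w = if a %% m i == 0 then w else E i (a %% m i) :: w.
Proof. by case: w => [|[j d|j d] w'] //= /negbTE ->. Qed.

Lemma pushE_head i a d w : push m (E i a) (E i d :: w) =
  if (a %% m i + d) %% m i == 0 then w else E i ((a %% m i + d) %% m i) :: w.
Proof. by rewrite /= eqxx. Qed.

Lemma reduced_push x w : reduced w -> reduced (push m x w).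
Proof.
case: x => [i a|j b]; last first.
  case: w => [|[i a|j' b'] w'] //=.
  by case: ifP => [_|/negbT nc] /= /andP[r2 r3] //=; rewrite nc r2 r3.
case h: (head_E i w).
  case: w h => [|[j d|j d] w'] //= /eqP -> /and3P[_ c r].
  rewrite eqxx; case: ifP => [_|/negbT nz] //=.
  rewrite nz modn_mod eqxx r andbT /=.
  by case: w' c {r} => [|[? ?|? ?] ?] //=; rewrite andbT.
move=> rw; rewrite pushE_nohead ?h //; case: ifP => [_|/negbT nz] //=.
rewrite nz modn_mod eqxx rw /= andbT.
by case: w h {rw} => [|[j d|j d] w'] //= /negbT; rewrite eq_sym.
Qed.

Lemma pushE0 i a w : reduced w -> a %% m i = 0 -> push m (E i a) w = w.
Proof.
move=> rw a0; case h: (head_E i w); last by rewrite pushE_nohead ?h // a0 eqxx.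
case: w h rw => [|[j d|j d] w'] //= /eqP -> /and3P[/andP[d0 /eqP dm] _ _].
by rewrite eqxx a0 add0n dm (negbTE d0).
Qed.

Lemma pushE_add i a c w : reduced w ->
  push m (E i a) (push m (E i c) w) = push m (E i (a + c)) w.
Proof.
move=> rw; case h: (head_E i w); last first.
  rewrite (pushE_nohead c) ?h //; case: ifP => [/eqP c0|/negbT nz].
    by rewrite !pushE_nohead ?h // -(modnDmr a c) c0 addn0.
  by rewrite pushE_head (pushE_nohead (a + c)) ?h // modnDm.
case: w h rw => [|[j d|j d] w'] // /eqP -> /and3P[/andP[d0 /eqP dm] cw _].
have nh : ~~ head_E i w' by case: w' cw => [|[? ?|? ?] ?] //=; rewrite eq_sym.
rewrite !pushE_head; case: ifP => [/eqP c0|_].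
  have -> : ((a + c) %% m i + d) %% m i = a %% m i.
    by rewrite modnDml -addnA -modnDmr -(modnDml c) c0 addn0.
  by rewrite pushE_nohead.
by rewrite pushE_head modnDmr modnDml addnA addnAC modnDmr addnAC [in RHS]modnDml.
Qed.

Lemma pushH_inv j b w : reduced w -> push m (H j b) (push m (H j (~~ b)) w) = w.
Proof.
case: w => [|[i a|j' b'] w'] /=; rewrite ?eqxx ?negbK //=.
case: ifP => [/andP[/eqP -> /eqP ->] /andP[c _]|/negbT nc _] /=.
  by case: w' c => [|[? ?|j2 b2] ?] //= /negbTE ->.
by rewrite !eqxx.
Qed.

Lemma reduced_foldr r s : reduced r -> reduced (foldr (push m) r s).
Proof. by move=> rr; elim: s => //= x s IH; apply: reduced_push. Qed.

Lemma reduced_norm s : reduced (norm m s).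
Proof. exact: reduced_foldr. Qed.

Lemma foldr_push_cons r x s :
  foldr (push m) r (x :: s) = push m x (foldr (push m) r s).
Proof. by []. Qed.

(* [push] is an action of letters on reduced words, hence [foldr push r]
   only depends on the normal form; this gives compatibility of [Geq] with
   right concatenation. *)
Lemma foldr_push_push x s r : reduced s -> reduced r ->
  foldr (push m) r (push m x s) = push m x (foldr (push m) r s).
Proof.
move=> rs rr; case: x => [i a|j b].
  case h: (head_E i s).
    case: s h rs => [|[j c|j c] s'] // /eqP -> _.
    rewrite pushE_head foldr_push_cons pushE_add ?reduced_foldr //.
    case: ifP => [/eqP c0|_]; first by rewrite pushE0 ?reduced_foldr // -modnDml.
    by rewrite foldr_push_cons pushE_mod [RHS]pushE_mod modn_mod modnDml.
  rewrite (pushE_nohead a) ?h //; case: ifP => [/eqP a0|_].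
    by rewrite pushE0 ?reduced_foldr.
  by rewrite foldr_push_cons [RHS]pushE_mod.
case: s rs => [|[i a|j' b'] s'] _ //.
change (push m (H j b) (H j' b' :: s')) with
  (if (j' == j) && (b' == ~~ b) then s' else H j b :: H j' b' :: s').
case: ifP => [/andP[/eqP -> /eqP ->]|_] //.
by rewrite foldr_push_cons pushH_inv ?reduced_foldr.
Qed.

Lemma foldr_push_norm r u : reduced r ->
  foldr (push m) r u = foldr (push m) r (norm m u).
Proof.
move=> rr; elim: u => //= x u IH.
by rewrite IH foldr_push_push ?reduced_norm.
Qed.

Lemma Geq_catl a b c : Geq m a b -> Geq m (c ++ a) (c ++ b).
Proof. by rewrite /Geq /norm !foldr_cat => ->. Qed.

Lemma Geq_catr a b c : Geq m a b -> Geq m (a ++ c) (b ++ c).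
Proof.
rewrite /Geq /norm !foldr_cat => e.
by rewrite (foldr_push_norm _ (reduced_norm c)) [RHS](foldr_push_norm _ (reduced_norm c)) /norm e.
Qed.

Global Instance Geq_equiv : Equivalence (Geq m).
Proof. by split; rewrite /Geq; [move=> ? | move=> ? ? -> | move=> ? ? ? -> ->]. Qed.

Global Instance cat_Geq_proper : Proper (Geq m ==> Geq m ==> Geq m) (@cat letter).
Proof. by move=> a a' ha b b' hb; rewrite (Geq_catl a hb); apply: Geq_catr. Qed.


(* For [m i = 0] the letter [E i a] has infinite order while [linv] still
   returns [E i 0], which is not its inverse. *)
Definition invertible_letter (x : letter) : bool :=
  if x is E i _ then 0 < m i else true.
Definition invertible (w : word) : bool := all invertible_letter w.

Lemma invertible_cat a b : invertible (a ++ b) = invertible a && invertible b.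
Proof. exact: all_cat. Qed.

Lemma invertible_ginv a : invertible (ginv m a) = invertible a.
Proof. by rewrite /invertible /ginv all_rev all_map; apply: eq_all => -[]. Qed.

Lemma ginv_cat a b : ginv m (a ++ b) = ginv m b ++ ginv m a.
Proof. by rewrite /ginv map_cat rev_cat. Qed.

Lemma ginv_cons x a : ginv m (x :: a) = ginv m a ++ [:: linv m x].
Proof. by rewrite /ginv /= rev_cons cats1. Qed.

Lemma cat_linvr x : invertible_letter x -> Geq m [:: x; linv m x] [::].
Proof.
case: x => [i a|j b] /= mi_gt0; rewrite /Geq /norm !foldr_push_cons.
  2: by rewrite pushH_inv.
rewrite pushE_add // pushE0 //.
by rewrite -modnDml subnKC ?modnn // ltnW // ltn_pmod.
Qed.

Lemma cat_linvl x : invertible_letter x -> Geq m [:: linv m x; x] [::].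
Proof.
case: x => [i a|j b] /= mi_gt0; rewrite /Geq /norm !foldr_push_cons.
  rewrite pushE_add // pushE0 //.
  by rewrite -modnDmr subnK ?modnn // ltnW // ltn_pmod.
by rewrite -{2}(negbK b) pushH_inv.
Qed.

Lemma cat_ginvr a : invertible a -> Geq m (a ++ ginv m a) [::].
Proof.
elim: a => //= x a IH /andP[ix ia].
rewrite ginv_cons catA -cat1s -(catA [:: x]) (IH ia).
exact: cat_linvr.
Qed.

Lemma cat_ginvl a : invertible a -> Geq m (ginv m a ++ a) [::].
Proof.
elim: a => //= x a IH /andP[ix ia].
rewrite ginv_cons -catA.
change ([:: linv m x] ++ x :: a) with ([:: linv m x; x] ++ a).
by rewrite (cat_linvl ix); apply: IH.
Qed.

Lemma catKg v w : invertible v -> Geq m (ginv m v ++ (v ++ w)) w.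
Proof. by move=> iv; rewrite catA (cat_ginvl iv). Qed.

Lemma ginvK v : invertible v -> Geq m (ginv m (ginv m v)) v.
Proof.
move=> iv; have iv' : invertible (ginv m v) by rewrite invertible_ginv.
rewrite -[X in Geq m X _]cats0 -{1}(cat_ginvl iv) catA.
by rewrite (cat_ginvl iv').
Qed.

Lemma Geq_ginv a b : invertible a -> invertible b -> Geq m a b ->
  Geq m (ginv m a) (ginv m b).
Proof.
move=> ia ib e.
rewrite -[X in Geq m X _]cats0 -(cat_ginvr ib) -{1}e.
exact: catKg.
Qed.


Lemma epowSr i n : epow i n.+1 = epow i n ++ egen i.
Proof.
rewrite /epow; elim: n => [|n IH] //.
change (flatten (nseq n.+2 (egen i))) with (egen i ++ flatten (nseq n.+1 (egen i))).
by rewrite [in LHS]IH catA.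
Qed.

Lemma norm_epow i n : norm m (epow i n) = push m (E i n) [::].
Proof.
elim: n => [|n IH]; first by rewrite /= mod0n.
change (norm m (epow i n.+1)) with (push m (E i 1) (norm m (epow i n))).
by rewrite IH pushE_add // add1n.
Qed.

Lemma Geq_epow_mod i a b : a %% m i = b %% m i -> Geq m (epow i a) (epow i b).
Proof. by move=> e; rewrite /Geq !norm_epow pushE_mod [RHS]pushE_mod e. Qed.

Lemma epow_eq1 i a : a %% m i = 0 -> Geq m (epow i a) [::].
Proof. by move=> e; rewrite /Geq !norm_epow pushE0. Qed.

Lemma invertible_epow i n : 0 < m i -> invertible (epow i n).
Proof. by move=> h; elim: n => // n IH; rewrite epowSr invertible_cat IH /= h. Qed.

Lemma invertible_flatten (s : seq nat) (f : nat -> word) :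
  {in s, forall j, invertible (f j)} -> invertible (flatten [seq f j | j <- s]).
Proof.
elim: s => //= j s IH h; rewrite invertible_cat h ?mem_head // IH // => j' js.
by apply: h; rewrite in_cons js orbT.
Qed.

Lemma flatten_eq1 (s : seq nat) (f : nat -> word) :
  {in s, forall j, Geq m (f j) [::]} -> Geq m (flatten [seq f j | j <- s]) [::].
Proof.
elim: s => //= j s IH h; rewrite (h j (mem_head _ _)); apply: IH => j' js.
by apply: h; rewrite in_cons js orbT.
Qed.

Lemma mem_rev_iota_range lo hi j :
  (j \in rev (iota lo (hi.+1 - lo))) = (lo <= j <= hi).
Proof. by rewrite mem_rev mem_iota; apply/idP/idP => /andP[h1 h2]; apply/andP; split; lia. Qed.

Lemma invertible_eprod lo hi u : (forall j, lo <= j <= hi -> 0 < m j) ->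
  invertible (eprod_desc lo hi u).
Proof.
by move=> h; apply: invertible_flatten => j; rewrite mem_rev_iota_range => /h; apply: invertible_epow.
Qed.

Lemma eprod_eq1 lo hi u : (forall j, lo <= j <= hi -> u j %% m j = 0) ->
  Geq m (eprod_desc lo hi u) [::].
Proof.
by move=> h; apply: flatten_eq1 => j; rewrite mem_rev_iota_range => /h; apply: epow_eq1.
Qed.

Lemma eq_eprod lo hi u v : (forall j, lo <= j <= hi -> u j = v j) ->
  eprod_desc lo hi u = eprod_desc lo hi v.
Proof.
move=> h; rewrite /eprod_desc; congr flatten; apply/eq_in_map => j.
by rewrite mem_rev_iota_range => /h ->.
Qed.

Lemma eprod_split i hi u : 1 <= i <= hi ->
  eprod_desc 1 hi u = eprod_desc i.+1 hi u ++ epow i (u i) ++ eprod_desc 1 i.-1 u.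
Proof.
move=> /andP[i_gt0 le_i_hi]; rewrite /eprod_desc.
have -> : hi.+1 - 1 = (i.-1.+1 - 1) + (hi.+1 - i.+1).+1 by lia.
rewrite iotaD; have -> : 1 + (i.-1.+1 - 1) = i by lia.
by rewrite /= rev_cat rev_cons -cats1 !map_cat !flatten_cat /= cats0 catA.
Qed.


Lemma invertible_gconj X c : invertible X -> invertible c -> invertible (gconj m X c).
Proof. by move=> iX ic; rewrite /gconj /gmul !invertible_cat invertible_ginv iX ic. Qed.

Lemma invertible_gcomm A Y : invertible A -> invertible Y -> invertible (gcomm m A Y).
Proof. by move=> iA iY; rewrite /gcomm /gmul !invertible_cat !invertible_ginv iA iY. Qed.

Lemma invertible_gen (S : word -> Prop) c :
  (forall w, S w -> invertible w) -> gen m S c -> invertible c.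
Proof.
move=> iS; elim=> [w /iS | // | u v _ iu _ iv | u _ iu] //.
- by rewrite /gmul invertible_cat iu iv.
- by rewrite invertible_ginv.
Qed.

Lemma gconj_eq1 X c : invertible X -> Geq m c [::] -> Geq m (gconj m X c) [::].
Proof. by move=> iX c1; rewrite /gconj /gmul c1 cats0 (cat_ginvr iX). Qed.

Lemma gcomm_eq1l A Y : invertible A -> invertible Y -> Geq m A [::] ->
  Geq m (gcomm m A Y) [::].
Proof.
move=> iA iY A1; rewrite /gcomm /gmul (Geq_ginv iA _ A1) // A1 /= cats0.
exact: cat_ginvr.
Qed.

Lemma gcomm_eq1r A Y : invertible A -> invertible Y -> Geq m Y [::] ->
  Geq m (gcomm m A Y) [::].
Proof.
move=> iA iY Y1; rewrite /gcomm /gmul (Geq_ginv iY _ Y1) // Y1 !cats0.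
exact: cat_ginvr.
Qed.

Lemma Geq_gcomml A A' Y : invertible A -> invertible A' -> Geq m A A' ->
  Geq m (gcomm m A Y) (gcomm m A' Y).
Proof. by move=> iA iA' eA; rewrite /gcomm /gmul (Geq_ginv iA iA' eA) eA. Qed.

Lemma gconj_gcomm_shift X A Y e :
  invertible X -> invertible A -> invertible Y -> invertible e ->
  Geq m ((gconj m X (gcomm m (A ++ e) Y) ++ ginv m (gconj m X (gcomm m A Y)))
          ++ ((X ++ A ++ Y) ++ e))
        (X ++ (A ++ e) ++ Y).
Proof.
move=> iX iA iY ie.
rewrite /gconj /gcomm /gmul !ginv_cat (ginvK iX) (ginvK iY) (ginvK iA) -!catA.
by rewrite (catKg _ iX) (catKg _ iY) (catKg _ iA) (catKg _ iX) (catKg _ iA)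
  (catKg _ iY) (cat_ginvl ie) cats0.
Qed.

End Words.

Section NormalForm.
Variables (m : nat -> nat) (k : nat).
Hypothesis m_gt1 : forall j, 1 <= j <= k -> 1 < m j.

(* Exponents range over [1, m j] as in S_1; [u j = m j] encodes e_j^{m_j} = 1. *)
Definition admissible (u : nat -> nat) := forall j, 1 <= j <= k -> 1 <= u j <= m j.

Lemma invertible_eprod_in lo hi u : 1 <= lo -> hi <= k ->
  invertible m (eprod_desc lo hi u).
Proof. by move=> lo_gt0 hi_le_k; apply: invertible_eprod => j hj; have := m_gt1 (j := j); lia. Qed.

Lemma invertible_S1 c : S1 m k c -> invertible m c.
Proof.
move=> [t [u [/andP[t_gt1 t_le_k] _ _ _ ->]]].
have mt_gt0 : 0 < m t by have := m_gt1 (j := t); lia.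
apply: invertible_gconj; first exact: invertible_eprod_in.
apply: invertible_gcomm; first exact: invertible_epow.
by apply: invertible_eprod_in => //; lia.
Qed.

(* S_1 omits exactly the parameters for which ^X[e_t^a, Y] is trivial:
   a = 0 mod m_t, or Y = 1 because every u_j with j < t equals m_j. *)
Lemma gconj_gcomm_in_S1 t a u : 1 <= t <= k -> admissible u ->
  exists2 c, gen m (S1 m k) c &
    Geq m c (gconj m (eprod_desc t.+1 k u) (gcomm m (epow t a) (eprod_desc 1 t.-1 u))).
Proof.
move=> /andP[t_gt0 t_le_k] hu.
have iX := @invertible_eprod_in t.+1 k u erefl (leqnn k).
have iY := @invertible_eprod_in 1 t.-1 u erefl (leq_trans (leq_pred t) t_le_k).
have mt_gt0 : 0 < m t by have := m_gt1 (j := t); lia.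
have iA b : invertible m (epow t b) by apply: invertible_epow.
case: (eqVneq (a %% m t) 0) => [a0|a_nz].
  exists gone; first exact: gen_one.
  by symmetry; apply: gconj_eq1 => //; apply: gcomm_eq1l => //; apply: epow_eq1.
case: (boolP (has (fun j => u j != m j) (iota 1 t.-1))) => [/hasP[j0]|/hasPn u_full].
  rewrite mem_iota => hj0 uj0.
  pose u' j := if j == t then a %% m t else u j.
  have eqX : eprod_desc t.+1 k u' = eprod_desc t.+1 k u.
    by apply: eq_eprod => j hj; rewrite /u'; case: eqP => //; lia.
  have eqY : eprod_desc 1 t.-1 u' = eprod_desc 1 t.-1 u.
    by apply: eq_eprod => j hj; rewrite /u'; case: eqP => //; lia.
  have lt_a_mt := ltn_pmod a mt_gt0.
  exists (gconj m (g_xi k t u') (f_lam m t u')).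
    apply: gen_base; exists t, u'; split.
    - by apply/andP; split; lia.
    - move=> j hj; rewrite /u'; case: eqP => [->|_]; last exact: hu.
      by move: a_nz; rewrite -lt0n; lia.
    - by rewrite /u' eqxx; lia.
    - by exists j0; split; [lia | rewrite /u' ifN //; apply/eqP; lia].
    - by [].
  rewrite /g_xi /f_lam eqX eqY /u' eqxx /gconj /gmul.
  by rewrite (Geq_gcomml _ (iA a) (iA _) (Geq_epow_mod (esym (modn_mod a (m t))))).
exists gone; first exact: gen_one.
symmetry; apply: gconj_eq1 => //; apply: gcomm_eq1r => //.
apply: eprod_eq1 => j hj.
have /u_full : j \in iota 1 t.-1 by rewrite mem_iota; lia.
by rewrite negbK => /eqP ->; apply: modnn.
Qed.


Lemma eprod_cat_egen u i : 1 <= i <= k -> admissible u ->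
  exists d u', [/\ gen m (S1 m k) d, admissible u' &
     Geq m (d ++ (eprod_desc 1 k u ++ egen i)) (eprod_desc 1 k u')].
Proof.
move=> hi hu.
have [c1 S1c1 ec1] := gconj_gcomm_in_S1 (u i).+1 hi hu.
have [c0 S1c0 ec0] := gconj_gcomm_in_S1 (u i) hi hu.
have iX := @invertible_eprod_in i.+1 k u erefl (leqnn k).
have iY := @invertible_eprod_in 1 i.-1 u erefl (leq_trans (leq_pred i) (proj2 (andP hi))).
have mi_gt1 := m_gt1 hi.
have iA b : invertible m (epow i b) by apply: invertible_epow; lia.
pose u' j := if j == i then (if u i == m i then 1 else (u i).+1) else u j.
exists (c1 ++ ginv m c0), u'; split.
- exact: gen_mul S1c1 (gen_inv S1c0).
- move=> j hj; rewrite /u'; case: eqP => [->|_]; last exact: hu.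
  by have := hu i hi; case: eqP; lia.
have eqX : eprod_desc i.+1 k u' = eprod_desc i.+1 k u.
  by apply: eq_eprod => j hj; rewrite /u'; case: eqP => //; lia.
have eqY : eprod_desc 1 i.-1 u' = eprod_desc 1 i.-1 u.
  by apply: eq_eprod => j hj; rewrite /u'; case: eqP => //; lia.
have eA : Geq m (epow i (u' i)) (epow i (u i).+1).
  apply: Geq_epow_mod; rewrite /u' eqxx; case: eqP => // ->.
  by rewrite -[(m i).+1]addn1 modnDl.
rewrite (eprod_split u hi) (eprod_split u' hi) eqX eqY eA !epowSr.
have iXAY := invertible_gconj iX (invertible_gcomm (iA (u i)) iY).
rewrite (Geq_ginv (invertible_gen invertible_S1 S1c0) iXAY ec0).
rewrite ec1 epowSr; apply: gconj_gcomm_shift => //=; rewrite andbT; lia.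
Qed.


Definition egens (l : seq nat) : word := flatten (map egen l).
Definition in_range (l : seq nat) : bool := all (fun i => 1 <= i <= k) l.

Lemma egens_cat l l' : egens (l ++ l') = egens l ++ egens l'.
Proof. by rewrite /egens map_cat flatten_cat. Qed.

Lemma invertible_G1gens w : G1gens k w -> invertible m w.
Proof. by move=> [i [hi ->]]; rewrite /invertible /= andbT; have := m_gt1 hi; lia. Qed.

Lemma ginv_egens l : in_range l ->
  exists2 l', in_range l' & Geq m (ginv m (egens l)) (egens l').
Proof.
elim: l => [|i l IH] /=; first by exists [::].
move=> /andP[hi /IH[l' rl' el']].
exists (l' ++ nseq (m i).-1 i).
  by rewrite /in_range all_cat all_nseq hi orbT andbT; apply: rl'.
rewrite -cat1s egens_cat ginv_cat el' egens_cat; apply: Geq_catl.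
rewrite /egens map_nseq /Geq -/(epow i _) norm_epow /ginv /=.
by rewrite (modn_small (m := 1)) ?subn1 //; apply: m_gt1.
Qed.

Lemma in_G1_egens w : in_G1 m k w ->
  exists2 l, in_range l & Geq m w (egens l).
Proof.
elim=> [w0 [i [hi ->]] | | u v _ [lu ru eu] _ [lv rv ev] | u Gu [lu ru eu]].
- by exists [:: i]; rewrite /in_range //= hi.
- by exists [::].
- exists (lu ++ lv); last by rewrite /gmul egens_cat eu ev.
  by rewrite /in_range all_cat; apply/andP.
- have [l' rl' el'] := ginv_egens ru.
  exists l' => //; rewrite -el'; apply: Geq_ginv; last exact: eu.
    exact: invertible_gen invertible_G1gens Gu.
  apply: invertible_flatten => j /(allP ru) hj.
  by rewrite /invertible /= andbT; have := m_gt1 hj; lia.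
Qed.

Lemma egens_eprod l : in_range l ->
  exists gamma u, [/\ gen m (S1 m k) gamma, admissible u &
     Geq m (gamma ++ egens l) (eprod_desc 1 k u)].
Proof.
elim/last_ind: l => [_|l i IH].
  exists gone, m; split; first exact: gen_one.
  - by move=> j hj; have := m_gt1 hj; lia.
  - by symmetry; apply: eprod_eq1 => j _; apply: modnn.
rewrite /in_range all_rcons => /andP[hi /IH[g [u [S1g hu eg]]]].
have [d [u' [S1d hu' ed]]] := eprod_cat_egen hi hu.
exists (d ++ g), u'; split => //; first exact: gen_mul.
by rewrite -cats1 egens_cat -!catA (catA g) eg.
Qed.

End NormalForm.

Theorem lemma3p8 (n k : nat) (m : nat -> nat) :
  (1 <= k)%N ->
  (forall i, (1 <= i <= k)%N -> (2 <= m i)%N) ->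
  forall w : word, in_G n k w -> in_G1 m k w ->
  exists (gamma : word) (z : nat -> int),
    gen m (S1 m k) gamma /\
    Geq m (gmul gamma w) (enormal m k z).
Proof.
move=> _ m_gt1 w _ /(in_G1_egens m_gt1)[l rl el].
have [gamma [u [S1gamma _ egamma]]] := egens_eprod m_gt1 rl.
exists gamma, (fun j => Posz (u j)); split => //.
have -> : enormal m k (fun j => Posz (u j)) = eprod_desc 1 k u.
  by rewrite /enormal /eprod_desc subSS subn0.
by rewrite /gmul el.
Qed.
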